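(* Let $f\in\mathcal{F}$ be $n$-ary and let $\varphi_1(x,\vec y),\dots,\varphi_n(x,\vec y)$ be terms of $\mathbf{A}^{\natural}$. Then for every $a\in A$ and every tuple $\vec c$ of elements of $A^{\natural}$, $f(\varphi_1,\dots,\varphi_n)(a^1,\vec c)=f(\varphi_1,\dots,\varphi_n)(a^3,\vec c)$.
   Context: $\mathbf{A}$ is a fixed non-trivial algebra whose set $\mathcal{F}$ of basic operations contains no constant symbols, and $h$ is a unary function on $A$. Construction of $\mathbf{A}^{\natural}$: universe is the disjoint union of eight copies $A_1,\dots,A_8$ of $A$ ($a^i$ is the copy of $a$ in $A_i$); operations: each $n$-ary $f\in\mathcal{F}$ with $f(a_1^{m_1},\dots,a_n^{m_n})=(f^{\mathbf{A}}(a_1,\dots,a_n))^5$; a ternary $\heartsuit$ with $\heartsuit(a^m,b^n,c^k)=a^1$ if $a^m=c^k$, $h(a)^5=b^n$, $m\in\{1,3,4\}$; $=a^2$ if $a^m=c^k$, $h(a)^5=b^n$, $m\in\{2,5,6,7,8\}$; $=a^4$ if $m,k\in\{1,3,4\}$ and ($a^m\ne c^k$ or $h(a)^5\ne b^n$); $=a^7$ if $\{m,k\}\cap\{2,5,6,7,8\}\ne\emptyset$ and ($a^m\ne c^k$ or $h(a)^5\ne b^n$); a unary $\Box$ with $\Box(a^m)=a^m$ for $m\in\{1,2\}$, $a^{m-1}$ for even $m\ge3$, $a^{m+1}$ for odd $m\ge3$. *)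

From mathcomp Require Import all_boot.
From Stdlib Require Import ClassicalDescription.

Set Implicit Arguments.
Unset Strict Implicit.
Unset Printing Implicit Defensive.

(* A signature: a type of operation symbols [F] with arities [ar]. An algebra
   over the signature: a carrier [A] and, for each symbol [f], an operation
   [opA f : ('I_(ar f) -> A) -> A]. *)

Inductive copy := C1 | C2 | C3 | C4 | C5 | C6 | C7 | C8.

(* The universe of A^natural: a^i is represented by (a, Ci). *)
Definition natural_carrier (A : Type) : Type := (A * copy)%type.

Definition in134 (m : copy) : bool :=
  match m with C1 | C3 | C4 => true | _ => false end.

Definition nat_op (F : Type) (ar : F -> nat) (A : Type)
  (opA : forall f : F, ('I_(ar f) -> A) -> A)
  (f : F) (args : 'I_(ar f) -> natural_carrier A) : natural_carrier A :=
  (opA f (fun i => (args i).1), C5).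

Definition nat_heart (A : Type) (h : A -> A)
  (u v w : natural_carrier A) : natural_carrier A :=
  let (a, m) := u in
  let (c, k) := w in
  if excluded_middle_informative (u = w /\ (h a, C5) = v)
  then (if in134 m then (a, C1) else (a, C2))
  else (if in134 m && in134 k then (a, C4) else (a, C7)).

Definition box_copy (m : copy) : copy :=
  match m with
  | C1 => C1 | C2 => C2
  | C3 => C4 | C4 => C3
  | C5 => C6 | C6 => C5
  | C7 => C8 | C8 => C7
  end.

Definition nat_box (A : Type) (u : natural_carrier A) : natural_carrier A :=
  (u.1, box_copy u.2).

Inductive term (F : Type) (ar : F -> nat) (V : Type) : Type :=
| Var : V -> term ar V
| App : forall f : F, ('I_(ar f) -> term ar V) -> term ar V
| Heart : term ar V -> term ar V -> term ar V -> term ar V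
| Box : term ar V -> term ar V.

Arguments Var {F ar V}.
Arguments App {F ar V}.
Arguments Heart {F ar V}.
Arguments Box {F ar V}.

Fixpoint eval_nat (F : Type) (ar : F -> nat) (A : Type)
  (opA : forall f : F, ('I_(ar f) -> A) -> A) (h : A -> A) (V : Type)
  (env : V -> natural_carrier A) (t : term ar V) : natural_carrier A :=
  match t with
  | Var v => env v
  | App f args => nat_op opA (fun i => eval_nat opA h env (args i))
  | Heart t1 t2 t3 =>
      nat_heart h (eval_nat opA h env t1) (eval_nat opA h env t2)
                  (eval_nat opA h env t3)
  | Box t1 => nat_box (eval_nat opA h env t1)
  end.

(* Variables (x, y_1, ..., y_k) are 'I_k.+1 with x = index 0; the assignment
   x := u, y_i := c i. *)
Definition assign (A : Type) (k : nat) (u : natural_carrier A)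
  (c : 'I_k -> natural_carrier A) (v : 'I_k.+1) : natural_carrier A :=
  match unlift ord0 v with
  | None => u
  | Some i => c i
  end.

From mathcomp Require Import all_boot.
From Stdlib Require Import FunctionalExtensionality.

(* The value of a basic operation [f] of A^natural ignores the copy indices of
   its arguments, and the first coordinate of any term value depends only on
   the first coordinates of the values of its variables: [f] and the box keep
   the underlying element, and the heart returns a copy of its first argument's
   underlying element.  Since a^1 and a^3 have the same underlying element,
   both sides agree. *)

Lemma nat_heart_fst (A : Type) (h : A -> A) (u v w : natural_carrier A) :
  (nat_heart h u v w).1 = u.1.
Proof.
case: u w => a m [c k]; rewrite /nat_heart.
by case: ClassicalDescription.excluded_middle_informative;
  [case: (in134 m) | case: (in134 m && in134 k)].
Qed.

Lemma nat_op_eq_fst (F : Type) (ar : F -> nat) (A : Type)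
    (opA : forall f : F, ('I_(ar f) -> A) -> A) (f : F)
    (args1 args2 : 'I_(ar f) -> natural_carrier A) :
  (forall i, (args1 i).1 = (args2 i).1) ->
  nat_op opA args1 = nat_op opA args2.
Proof. by move=> eq_args; rewrite /nat_op (functional_extensionality _ _ eq_args). Qed.

Lemma eval_nat_eq_fst (F : Type) (ar : F -> nat) (A : Type)
    (opA : forall f : F, ('I_(ar f) -> A) -> A) (h : A -> A) (V : Type)
    (env1 env2 : V -> natural_carrier A) (t : term ar V) :
  (forall v, (env1 v).1 = (env2 v).1) ->
  (eval_nat opA h env1 t).1 = (eval_nat opA h env2 t).1.
Proof.
move=> eq_env; elim: t => [v | f args IHargs | t1 IH1 t2 _ t3 _ | t1 IH1] //=.
- by rewrite (functional_extensionality _ _ IHargs).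
- by rewrite !nat_heart_fst.
Qed.

Lemma assign_eq_fst (A : Type) (k : nat) (u1 u2 : natural_carrier A)
    (c : 'I_k -> natural_carrier A) :
  u1.1 = u2.1 -> forall v, (assign u1 c v).1 = (assign u2 c v).1.
Proof. by move=> eq_u v; rewrite /assign; case: (unlift ord0 v). Qed.

Theorem corollary6p6
  (F : Type) (ar : F -> nat) (A : Type)
  (opA : forall f : F, ('I_(ar f) -> A) -> A)
  (no_constants : forall f : F, 0 < ar f)
  (nontrivial : exists a b : A, a <> b)
  (h : A -> A)
  (f : F) (k : nat) (phi : 'I_(ar f) -> term ar 'I_k.+1)
  (a : A) (c : 'I_k -> natural_carrier A) :
  eval_nat opA h (assign (a, C1) c) (App f phi)
  = eval_nat opA h (assign (a, C3) c) (App f phi).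
Proof.
apply: nat_op_eq_fst => i.
exact/eval_nat_eq_fst/assign_eq_fst.
Qed.
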